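(* Let $R$ be a commutative ring in which $2$ is invertible, $I$ an ideal of $R$, and let $Q$ be a free $R$-module of rank $n$ with a fixed ordered basis. Let $\varphi'$ and $\varphi^*$ be invertible symmetric $n\times n$ matrices defining quadratic forms on $Q$ (quadratic spaces $Q_{\varphi'}$, $Q_{\varphi^*}$), with $\varphi'=\epsilon^t\varphi^*\epsilon$ for some $\epsilon\in\mathrm{GL}_n(R)$. Let $m\ge1$ and identify automorphisms of $Q\perp\mathbb{H}(R)^m$ with $(n+2m)\times(n+2m)$ matrices via the basis of $Q$ followed by $x_1,\dots,x_m,f_1,\dots,f_m$. Then $\mathrm{EO}_{(R,I)}(Q_{\varphi'},\mathbb{H}(R)^m)=(\epsilon^{-1}\perp I_{2m})\,\mathrm{EO}_{(R,I)}(Q_{\varphi^*},\mathbb{H}(R)^m)\,(\epsilon\perp I_{2m})$.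
   Context: For an invertible symmetric matrix $\varphi$ on $Q$, $\langle a,b\rangle_\varphi=a^t\varphi b$ in coordinates and $q_\varphi(a)=\tfrac12\langle a,a\rangle_\varphi$. $\mathbb{H}(R)^m=\mathbb{H}(P)$, $P=R^m$, $\mathbb{H}(P)=P\oplus P^*$ with basis $x_1,\dots,x_m$, dual basis $f_1,\dots,f_m$, form $q(y,g)=g(y)$. DSER transformations on $Q_\varphi\perp\mathbb{H}(P)$: for $\alpha:Q\to P$ let $\alpha^*:P^*\to Q$ satisfy $\langle\alpha^*(g),z\rangle_\varphi=g(\alpha(z))$, $E_\alpha(z,y,g)=(z-\alpha^*(g),y+\alpha(z)-\tfrac12\alpha\alpha^*(g),g)$; for $\beta:Q\to P^*$ let $\beta^*:P\to Q$ satisfy $\langle\beta^*(y),z\rangle_\varphi=\beta(z)(y)$, $E^*_\beta(z,y,g)=(z-\beta^*(y),y,g+\beta(z)-\tfrac12\beta\beta^*(y))$. $\mathrm{EO}_R(Q_\varphi,\mathbb{H}(P))$ is generated by all $E_\alpha,E^*_\beta$; $\mathrm{EO}_I(Q_\varphi,\mathbb{H}(P))$ by those with $\alpha(Q)\subseteq IP$, $\beta(Q)\subseteq IP^*$; $\mathrm{EO}_{(R,I)}(Q_\varphi,\mathbb{H}(P))$ is the normal closure of $\mathrm{EO}_I(Q_\varphi,\mathbb{H}(P))$ in $\mathrm{EO}_R(Q_\varphi,\mathbb{H}(P))$. *)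

From HB Require Import structures.
From mathcomp Require Import all_boot all_order all_algebra.
Set Implicit Arguments. Unset Strict Implicit. Unset Printing Implicit Defensive.
Import GRing.Theory.
Local Open Scope ring_scope.

Section DSER.
Variable R : comUnitRingType.

Definition is_ideal (I : R -> Prop) : Prop :=
  [/\ I 0, (forall x y, I x -> I y -> I (x + y)) & (forall r x, I x -> I (r * x))].

Definition mx_in {p q : nat} (I : R -> Prop) (A : 'M[R]_(p, q)) : Prop :=
  forall i j, I (A i j).

Variables (n m : nat).

(* Coordinates: Q = R^n (column vectors), P = R^m with basis x_1..x_m,
   P^* = R^m in the dual basis f_1..f_m. Vectors of Q ⊥ H(P) are columns
   (z ; y ; g) of size n + (m + m). *)

(* For alpha : Q -> P given by the m x n matrix A, the adjoint alpha^* : P^* -> Q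
   w.r.t. <a,b>_phi = a^T phi b is phi^{-1} A^T. Similarly for beta. *)
Definition adj (phi : 'M[R]_n) (A : 'M[R]_(m, n)) : 'M[R]_(n, m) :=
  invmx phi *m A^T.

Definition half : R := (2%:R)^-1.

(* E_alpha (z,y,g) = (z - alpha^* g, y + alpha z - 1/2 alpha alpha^* g, g) *)
Definition E_alpha (phi : 'M[R]_n) (A : 'M[R]_(m, n)) : 'M[R]_(n + (m + m)) :=
  block_mx 1%:M (row_mx 0 (- adj phi A))
           (col_mx A 0) (block_mx 1%:M (- (half *: (A *m adj phi A))) 0 1%:M).

(* E^*_beta (z,y,g) = (z - beta^* y, y, g + beta z - 1/2 beta beta^* y) *)
Definition E_beta (phi : 'M[R]_n) (B : 'M[R]_(m, n)) : 'M[R]_(n + (m + m)) :=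
  block_mx 1%:M (row_mx (- adj phi B) 0)
           (col_mx 0 B) (block_mx 1%:M 0 (- (half *: (B *m adj phi B))) 1%:M).

Inductive gen_by (S : 'M[R]_(n + (m + m)) -> Prop) : 'M[R]_(n + (m + m)) -> Prop :=
| gen_one : gen_by S 1%:M
| gen_gen g : S g -> gen_by S g
| gen_mul a b : gen_by S a -> gen_by S b -> gen_by S (a *m b)
| gen_inv a : gen_by S a -> gen_by S (invmx a).

Definition DSER_gens (phi : 'M[R]_n) (I : R -> Prop) (M : 'M[R]_(n + (m + m))) : Prop :=
  (exists A, mx_in I A /\ M = E_alpha phi A) \/
  (exists B, mx_in I B /\ M = E_beta phi B).

Definition EO_R (phi : 'M[R]_n) := gen_by (DSER_gens phi (fun _ => True)).
Definition EO_I (phi : 'M[R]_n) (I : R -> Prop) := gen_by (DSER_gens phi I).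
Definition EO_RI (phi : 'M[R]_n) (I : R -> Prop) :=
  gen_by (fun x => exists g h, EO_R phi g /\ EO_I phi I h /\ x = g *m h *m invmx g).

Definition perp_id (e : 'M[R]_n) : 'M[R]_(n + (m + m)) := block_mx e 0 0 1%:M.

End DSER.

From HB Require Import structures.
From mathcomp Require Import all_boot all_order all_algebra.
Import GRing.Theory.
Local Open Scope ring_scope.

(* Conjugation by [eps ⊥ I_2m] sends the generator [E_alpha phis A] to
   [E_alpha phi' (A eps)], because the [phi']-adjoint of [A eps] is
   [eps^-1] times the [phis]-adjoint of [A]; likewise for [E_beta].  Since
   [A |-> A eps] is a bijection preserving entries in [I], and conjugation is
   a group automorphism, it maps each generated subgroup, hence each normal
   closure, of the [phis] side onto its [phi'] counterpart. *)

Set Implicit Arguments.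
Unset Strict Implicit.
Unset Printing Implicit Defensive.

Section MatrixConjugation.
Variables (R : comUnitRingType) (k : nat).
Implicit Types P a b : 'M[R]_k.

Lemma invmxM a b : a \in unitmx -> b \in unitmx ->
  invmx (a *m b) = invmx b *m invmx a.
Proof.
move=> au bu; have abu : a *m b \in unitmx by rewrite unitmx_mul au.
rewrite -[LHS]mul1mx; apply: (canLR (mulmxK abu)).
by rewrite mulmxA -[invmx b *m _ *m a]mulmxA mulVmx // mulmx1 mulVmx.
Qed.

Definition mxconj P a := invmx P *m a *m P.

Variable P : 'M[R]_k.
Hypothesis P_unit : P \in unitmx.

Lemma mxconj1 : mxconj P 1%:M = 1%:M.
Proof. by rewrite /mxconj mulmx1 mulVmx. Qed.

Lemma mxconjM a b : mxconj P (a *m b) = mxconj P a *m mxconj P b.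
Proof. by rewrite /mxconj !mulmxA mulmxK. Qed.

Lemma mxconjV a : mxconj P (invmx a) = invmx (mxconj P a).
Proof.
have [au | anu] := boolP (a \in unitmx).
  by rewrite /mxconj !invmxM ?unitmx_mul ?unitmx_inv ?au ?P_unit // invmxK mulmxA.
have cnu : mxconj P a \notin unitmx.
  by rewrite !unitmx_mul unitmx_inv P_unit andbT.
by rewrite (invmx_out anu) (invmx_out cnu).
Qed.

Lemma mxconjK a : mxconj (invmx P) (mxconj P a) = a.
Proof. by rewrite /mxconj invmxK !mulmxA mulmxV // mul1mx mulmxK. Qed.

Lemma mxconjKV a : mxconj P (mxconj (invmx P) a) = a.
Proof. by rewrite /mxconj invmxK !mulmxA mulVmx // mul1mx mulmxKV. Qed.

End MatrixConjugation.

Section GeneratedSubgroupConjugation.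
Variables (R : comUnitRingType) (n m : nat).
Implicit Types (P : 'M[R]_(n + (m + m))) (S T : 'M[R]_(n + (m + m)) -> Prop).

Lemma gen_by_mxconj P S T : P \in unitmx ->
  (forall N, S N -> T (mxconj P N)) ->
  forall N, gen_by S N -> gen_by T (mxconj P N).
Proof.
move=> P_unit ST N; elim=> {N} [|g /ST|a b _ IHa _ IHb|a _ IHa].
- by rewrite mxconj1 //; apply: gen_one.
- exact: gen_gen.
- by rewrite mxconjM //; apply: gen_mul.
- by rewrite mxconjV //; apply: gen_inv.
Qed.

Lemma gen_by_mxconjE P S T : P \in unitmx ->
  (forall N, T (mxconj P N) <-> S N) ->
  forall N, gen_by T (mxconj P N) <-> gen_by S N.
Proof.
move=> P_unit ST N; split; last by apply: gen_by_mxconj => // {}N /ST.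
rewrite -{2}(mxconjK P_unit N); apply: gen_by_mxconj; first by rewrite unitmx_inv.
by move=> M; rewrite -{1}(mxconjKV P_unit M) => /ST.
Qed.

End GeneratedSubgroupConjugation.

Lemma mx_in_mulmx (R : comUnitRingType) (I : R -> Prop) p q r
    (A : 'M[R]_(p, q)) (B : 'M[R]_(q, r)) :
  is_ideal I -> mx_in I A -> mx_in I (A *m B).
Proof.
move=> [I0 ID IM] IA i j; rewrite mxE.
by apply: (big_ind I) => // l _; rewrite mulrC; apply: IM.
Qed.

Section ChangeOfForm.
Variables (R : comUnitRingType) (n m : nat) (phi' phis eps : 'M[R]_n).
Hypotheses (eps_unit : eps \in unitmx) (phis_unit : phis \in unitmx).
Hypothesis phi'E : phi' = eps^T *m phis *m eps.

Let P := perp_id m eps.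

Lemma perp_id_unit : P \in unitmx.
Proof. by rewrite block_diag_mx_unit eps_unit unitmx1. Qed.

Lemma perp_idV : perp_id m (invmx eps) = invmx P.
Proof. by rewrite invmx_block_diag ?perp_id_unit // invmx1. Qed.

Lemma adj_mulmx (A : 'M[R]_(m, n)) :
  adj phi' (A *m eps) = invmx eps *m adj phis A.
Proof.
rewrite /adj phi'E trmx_mul !invmxM ?unitmx_mul ?unitmx_tr ?eps_unit ?phis_unit //.
by rewrite -!mulmxA mulKmx ?unitmx_tr.
Qed.

Lemma mxconj_perp_id (X : 'M[R]_(n, m + m)) (Y : 'M[R]_(m + m, n))
    (Z : 'M[R]_(m + m)) :
  mxconj P (block_mx 1%:M X Y Z) = block_mx 1%:M (invmx eps *m X) (Y *m eps) Z.
Proof.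
rewrite /mxconj -perp_idV /P /perp_id.
by rewrite !mulmx_block !(mul0mx, mulmx0, mul1mx, mulmx1, addr0, add0r) mulVmx.
Qed.

Lemma E_alpha_mulmx (A : 'M[R]_(m, n)) :
  E_alpha phi' (A *m eps) = mxconj P (E_alpha phis A).
Proof.
rewrite /E_alpha mxconj_perp_id mul_mx_row mul_col_mx mulmx0 mul0mx mulmxN.
by rewrite adj_mulmx [A *m eps *m _]mulmxA mulmxK.
Qed.

Lemma E_beta_mulmx (B : 'M[R]_(m, n)) :
  E_beta phi' (B *m eps) = mxconj P (E_beta phis B).
Proof.
rewrite /E_beta mxconj_perp_id mul_mx_row mul_col_mx mulmx0 mul0mx mulmxN.
by rewrite adj_mulmx [B *m eps *m _]mulmxA mulmxK.
Qed.

Lemma DSER_gens_mxconj (J : R -> Prop) : is_ideal J ->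
  forall N, DSER_gens phi' J (mxconj P N) <-> DSER_gens phis J N.
Proof.
have mxconj_inj : injective (mxconj P).
  exact: can_inj (mxconjK perp_id_unit).
have mulmx_eps_epsV (A : 'M[R]_(m, n)) : A = A *m invmx eps *m eps.
  by rewrite mulmxKV.
move=> J_ideal N; split.
  case=> [[A [JA]] | [B [JB]]].
  - rewrite (mulmx_eps_epsV A) E_alpha_mulmx => /mxconj_inj ->.
    by left; exists (A *m invmx eps); split=> //; apply: mx_in_mulmx.
  - rewrite (mulmx_eps_epsV B) E_beta_mulmx => /mxconj_inj ->.
    by right; exists (B *m invmx eps); split=> //; apply: mx_in_mulmx.
case=> [[A [JA ->]] | [B [JB ->]]].
- by left; exists (A *m eps); rewrite E_alpha_mulmx; split=> //; apply: mx_in_mulmx.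
- by right; exists (B *m eps); rewrite E_beta_mulmx; split=> //; apply: mx_in_mulmx.
Qed.

Lemma EO_RI_mxconj (I : R -> Prop) : is_ideal I ->
  forall N, EO_RI phi' I (mxconj P N) <-> EO_RI phis I N.
Proof.
have P_unit := perp_id_unit.
have PV_unit : invmx P \in unitmx by rewrite unitmx_inv.
have R_ideal : is_ideal (fun _ : R => True) by [].
move=> I_ideal; apply: gen_by_mxconjE => // N.
have EO_R_mxconj := gen_by_mxconjE P_unit (DSER_gens_mxconj R_ideal).
have EO_I_mxconj := gen_by_mxconjE P_unit (DSER_gens_mxconj I_ideal).
split.
- move=> [g [h [Rg [Ih E]]]].
  exists (mxconj (invmx P) g), (mxconj (invmx P) h); split; [|split].
  + by apply/EO_R_mxconj; rewrite mxconjKV.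
  + by apply/EO_I_mxconj; rewrite mxconjKV.
  + by rewrite -(mxconjK P_unit N) E !mxconjM // mxconjV.
- move=> [g [h [Rg [Ih ->]]]].
  exists (mxconj P g), (mxconj P h); split; [|split].
  + exact/EO_R_mxconj.
  + exact/EO_I_mxconj.
  + by rewrite !mxconjM // mxconjV.
Qed.

End ChangeOfForm.

Theorem mainTheorem15 (R : comUnitRingType) (I : R -> Prop) (n m : nat)
  (phi' phis eps : 'M[R]_n) :
  (2%:R : R) \is a GRing.unit ->
  is_ideal I ->
  (0 < m)%N ->
  phi'^T = phi' -> phi' \in unitmx ->
  phis^T = phis -> phis \in unitmx ->
  eps \in unitmx ->
  phi' = eps^T *m phis *m eps ->
  forall M : 'M[R]_(n + (m + m)),
    EO_RI phi' I M <->
    exists N : 'M[R]_(n + (m + m)), EO_RI phis I N /\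
      M = perp_id m (invmx eps) *m N *m perp_id m eps.
Proof.
move=> _ I_ideal _ _ _ _ phis_unit eps_unit phi'E M.
have P_unit := perp_id_unit m eps_unit.
have EO_RI_mxconjE := @EO_RI_mxconj _ _ m _ _ _ eps_unit phis_unit phi'E _ I_ideal.
rewrite (perp_idV m eps_unit); split.
- move=> RIM; exists (mxconj (invmx (perp_id m eps)) M).
  by split; [apply/EO_RI_mxconjE; rewrite mxconjKV | rewrite -/(mxconj _ _) mxconjKV].
- by move=> [N [RIN ->]]; apply/EO_RI_mxconjE.
Qed.
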